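(* Let $\bm{\mu}\in X^{\mathcal{L}(\mathcal{T})}$ with $V_{s_0}(\bm{\mu})\neq\theta$. Let $\ell\in\mathcal{L}(\mathcal{T})$ satisfy $w^{s_0}_\ell(\bm{\mu})>0$ and let $s_0,s_1,\dots,s_k=\ell$ be the nodes on the path from the root to $\ell$. Then for every $s\in\{s_0,s_1,\dots,s_k\}$, \[w^s_\ell(\bm{\mu})=\frac{d_s(\bm{\mu})}{d(\mu_\ell,\theta)}.\]
   Context: $\mathcal{T}$ is a finite rooted tree with node set $S$, root $s_0$, children $\mathcal{C}(s)$, leaves $\mathcal{L}(\mathcal{T})$, $\mathcal{D}(s)$ the leaves descending from $s$; internal labels $L(s)\in\{\text{MAX},\text{MIN}\}$. $X\subseteq\mathbb{R}$ mean-parameter set of a one-parameter exponential family; $d(x,y)$ KL divergence between members with means $x,y$; threshold $\theta\in X$. $V_s(\bm{\mu})=\mu_s$ at leaves, max/min of children's values at MAX/MIN nodes; $a_s(\bm{\mu})=$'win' iff $V_s(\bm{\mu})\ge\theta$. Recursive weights: $a^*=a_{s_0}(\bm{\mu})$; $P=$MAX, $Q=$MIN if $a^*=$'win', swapped if 'lose'. Leaf $s$: $w^s_s=1$, $d_s=d(\mu_s,\theta)$ if ($a^*=$'win', $\mu_s\ge\theta$) or ($a^*=$'lose', $\mu_s<\theta$), else $0$. $L(s)=P$: $d_s=\max_c d_c$, fixed $c^*(s)\in\arg\max_c d_c$, if $d_s>0$: $w^s_\ell=w^{c^*(s)}_\ell$ on $\mathcal{D}(c^*(s))$, $0$ elsewhere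 in $\mathcal{D}(s)$. $L(s)=Q$, all $d_c>0$: $d_s=(\sum_c1/d_c)^{-1}$, $w^s_\ell=\frac{w^c_\ell/d_c}{\sum_{c'}1/d_{c'}}$ for $\ell\in\mathcal{D}(c)$. $L(s)=Q$ otherwise: $d_s=0$. Internal $s$ with $d_s=0$: $\bm{w}^s$ fixed arbitrary probability vector on $\mathcal{D}(s)$. *)

From Stdlib Require List.
From mathcomp Require Import all_boot all_order all_algebra.
Set Implicit Arguments. Unset Strict Implicit. Unset Printing Implicit Defensive.
Import Order.TTheory GRing.Theory Num.Theory.
Local Open Scope ring_scope.

(* Leaves carry a label (a nat, the leaf's name,
   used to index the mean vector mu); internal nodes carry their label
   L(s) : true = MAX, false = MIN, and the list of their children.
   A node of the tree is identified with the subtree rooted at it. *)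
Inductive tree : Type :=
| Leaf of nat
| Node of bool & seq tree.

Fixpoint leaves (t : tree) : seq nat :=
  match t with
  | Leaf l => [:: l]
  | Node _ cs => flatten (map leaves cs)
  end.

Fixpoint wf (t : tree) : bool :=
  match t with
  | Leaf _ => true
  | Node _ cs => (size cs != 0%N) && all wf cs
  end.

Inductive subtree : tree -> tree -> Prop :=
| st_refl t : subtree t t
| st_child b cs c s : List.In c cs -> subtree s c -> subtree s (Node b cs).

Inductive on_path (l : nat) : tree -> tree -> Prop :=
| op_here t : l \in leaves t -> on_path l t t
| op_child b cs c s : List.In c cs -> on_path l s c -> on_path l s (Node b cs).

Section GameTree.
Variable R : realFieldType.

Definition seqmax (s : seq R) : R :=
  if s is x :: s' then foldr Num.max x s' else 0.
Definition seqmin (s : seq R) : R :=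
  if s is x :: s' then foldr Num.min x s' else 0.

Variable mu : nat -> R.

Fixpoint value (t : tree) : R :=
  match t with
  | Leaf l => mu l
  | Node b cs => if b then seqmax (map value cs) else seqmin (map value cs)
  end.

Variable dist : R -> R -> R.
Variable theta : R.
Variable win : bool.

(* d_s(mu).  A node is a P-node iff its label (true = MAX) equals win. *)
Fixpoint dval (t : tree) : R :=
  match t with
  | Leaf l =>
      if (win && (theta <= mu l)) || (~~ win && (mu l < theta))
      then dist (mu l) theta else 0
  | Node b cs =>
      let ds := map dval cs in
      if b == win then seqmax ds
      else if all (fun x => 0 < x) ds then (\sum_(x <- ds) x^-1)^-1 else 0
  end.

Variable cstar : tree -> nat.
Variable arb : tree -> nat -> R.     (* fixed arbitrary probability vectors *)

Fixpoint weight (t : tree) (l : nat) : R :=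
  match t with
  | Leaf l' => if l == l' then 1 else 0
  | Node b cs =>
      let ws := map (fun c => weight c l) cs in
      if dval t == 0 then arb t l
      else if b == win then
        (if l \in leaves (nth (Leaf 0) cs (cstar t))
         then nth 0 ws (cstar t) else 0)
      else
        \sum_(p <- zip ws cs | l \in leaves p.2)
           (p.1 / dval p.2) / (\sum_(c <- cs) (dval c)^-1)
  end.

End GameTree.

From mathcomp Require Import all_boot all_order all_algebra.
From mathcomp Require Import ring.
Import Order.TTheory GRing.Theory Num.Theory.
Set Implicit Arguments. Unset Strict Implicit. Unset Printing Implicit Defensive.
Local Open Scope ring_scope.

(* Going from a node s on the path to its child c on the path multiplies both
   w^._l and d_. by the same positive factor: 1 at a P-node, whose weights and d
   are those of c^*(s) (and c^*(s) = c, since otherwise w^s_l = 0), and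
   (d_c sum_c' 1/d_c')^-1 at a Q-node.  Hence w^s_l / d_s is constant along the
   path below any node with w^s_l > 0 and d_s <> 0, and it equals
   1/d(mu_l, theta) at the leaf.  At the root d_s0 > 0: V_s0 <> theta puts the
   root value strictly on the a^* side of theta, which passes to some child at
   P-nodes and to all children at Q-nodes, down to leaves where mu_l <> theta. *)

Definition tree_In_ind (P : tree -> Prop) (P_leaf : forall n, P (Leaf n))
    (P_node : forall b cs, (forall c, List.In c cs -> P c) -> P (Node b cs)) :
    forall t, P t :=
  fix tree_ind t :=
    match t with
    | Leaf n => P_leaf n
    | Node b cs =>
        P_node b cs
          ((fix In_ind cs : forall c, List.In c cs -> P c :=
              match cs with
              | [::] => fun c cin => False_ind _ cin
              | c0 :: cs' => fun c cin =>
                  match cin with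
                  | or_introl e => eq_ind c0 P (tree_ind c0) c e
                  | or_intror cin' => In_ind cs' c cin'
                  end
              end) cs)
    end.

Section ListIn.
Variable A : Type.
Implicit Types (s : seq A) (P : pred A).

Lemma allInP P s : reflect (forall x, List.In x s -> P x) (all P s).
Proof.
elim: s => [|x s IH] /=; first by left.
apply: (iffP andP) => [[Px /IH Ps] y [<-|ys] | Hs]; [by [] | exact: Ps |].
by split; [apply: Hs; left | apply/IH => y ys; apply: Hs; right].
Qed.

Lemma mapInP (T : eqType) (f : A -> T) s y :
  reflect (exists2 x, List.In x s & y = f x) (y \in map f s).
Proof.
elim: s y => [|x s IH] y /=; first by right => -[].
rewrite inE; apply: (iffP predU1P) => [[-> | /IH [z zs ->]] | [z [<- | zs] ->]].
- by exists x; first left.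
- by exists z; first right.
- by left.
- by right; apply/IH; exists z.
Qed.

Lemma In_nth x0 s k : (k < size s)%N -> List.In (nth x0 s k) s.
Proof. by elim: s k => [//|x s IH] [|k] /= ks; [left | right; apply: IH]. Qed.

End ListIn.

Lemma leaves_nodeP b cs l :
  reflect (exists2 c, List.In c cs & l \in leaves c) (l \in leaves (Node b cs)).
Proof.
elim: cs => [|c cs IH] /=; first by right => -[].
rewrite mem_cat; apply: (iffP orP) => [[lc | /IH [c' c'cs lc']] | [c' [<- | c'cs] lc']].
- by exists c; first left.
- by exists c'; first right.
- by left.
- by right; apply/IH; exists c'.
Qed.

Lemma uniq_leaves_child b cs c :
  uniq (leaves (Node b cs)) -> List.In c cs -> uniq (leaves c).
Proof.
elim: cs => [//|a cs IH] /=; rewrite cat_uniq => /and3P [ua _ ucs] [<- // | ccs].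
exact: IH.
Qed.

Lemma leaves_child_eq b cs c c' l :
  uniq (leaves (Node b cs)) -> List.In c cs -> List.In c' cs ->
  l \in leaves c -> l \in leaves c' -> c = c'.
Proof.
elim: cs => [//|a cs IH] /=; rewrite cat_uniq => /and3P [_ disj ucs].
have notin_head d : List.In d cs -> l \in leaves d -> l \notin leaves a.
  by move=> dcs ld; apply: (hasPn disj); apply/(leaves_nodeP b); exists d.
move=> [<- | ccs] [<- | c'cs] lc lc' //.
- by rewrite (negbTE (notin_head c' c'cs lc')) in lc.
- by rewrite (negbTE (notin_head c ccs lc)) in lc'.
- exact: IH.
Qed.

Lemma big_leaves_child (R : nmodType) (F : tree -> R) b cs c l :
  uniq (leaves (Node b cs)) -> List.In c cs -> l \in leaves c ->
  \sum_(d <- cs | l \in leaves d) F d = F c.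
Proof.
elim: cs => [//|a cs IH] /=; rewrite cat_uniq => /and3P [_ disj ucs].
have notin_head d : List.In d cs -> l \in leaves d -> l \notin leaves a.
  by move=> dcs ld; apply: (hasPn disj); apply/(leaves_nodeP b); exists d.
move=> [<- | ccs] lc; rewrite big_cons.
- rewrite lc big_hasC ?addr0 // -all_predC; apply/allInP => d dcs /=.
  by apply: contraL lc => /(notin_head d dcs).
- by rewrite (negbTE (notin_head c ccs lc)); apply: IH.
Qed.

Lemma subtree_trans r s t : subtree r s -> subtree s t -> subtree r t.
Proof.
move=> rs st; elim: st rs => // b cs c s' ccs _ IH rs.
exact: st_child ccs (IH rs).
Qed.

Lemma subtree_uniq_leaves s t : subtree s t -> uniq (leaves t) -> uniq (leaves s).
Proof. by elim=> // b cs c s' ccs _ IH /uniq_leaves_child /(_ ccs). Qed.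

Lemma on_path_mem l s t : on_path l s t -> l \in leaves t.
Proof. by elim=> // b cs c s' ccs _ lc; apply/(leaves_nodeP b); exists c. Qed.

Section SeqMinMax.
Variable R : realFieldType.
Implicit Types (x y : R) (s : seq R).

Lemma foldr_sel_mem (op : R -> R -> R) x s :
  (forall y z, (op y z == y) || (op y z == z)) -> foldr op x s \in x :: s.
Proof.
move=> op_sel; elim: s => [|y s IH] /=; first exact: mem_head.
have /orP [/eqP -> | /eqP ->] := op_sel y (foldr op x s).
  by rewrite !inE eqxx orbT.
by move: IH; rewrite !inE => /orP [-> | ->]; rewrite ?orbT.
Qed.

Lemma seqmax_mem s : s != [::] -> seqmax s \in s.
Proof.
case: s => [//|x s] _; apply: foldr_sel_mem => y z.
by rewrite maxEle; case: ifP; rewrite eqxx ?orbT.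
Qed.

Lemma seqmin_mem s : s != [::] -> seqmin s \in s.
Proof.
case: s => [//|x s] _; apply: foldr_sel_mem => y z.
by rewrite minEle; case: ifP; rewrite eqxx ?orbT.
Qed.

Lemma seqmax_ge s y : y \in s -> y <= seqmax s.
Proof.
case: s => [//|x s]; rewrite inE /= foldrE => /predU1P [-> | ys].
  exact: bigmax_ge_id.
exact: le_bigmax_seq.
Qed.

Lemma seqmin_le s y : y \in s -> seqmin s <= y.
Proof.
case: s => [//|x s]; rewrite inE /= foldrE => /predU1P [-> | ys].
  exact: bigmin_le_id.
exact: ge_bigmin_seq.
Qed.

Lemma sum_inv_gt0 s : s != [::] -> all (fun x => 0 < x) s -> 0 < \sum_(x <- s) x^-1.
Proof.
case: s => [//|x s] _ /= /andP [x_gt0 s_gt0].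
rewrite big_cons ltr_pwDl ?invr_gt0 // big_seq sumr_ge0 // => y ys.
by rewrite invr_ge0 ltW // (allP s_gt0).
Qed.

End SeqMinMax.

Section GameValues.
Variables (R : realFieldType) (mu : nat -> R) (dist : R -> R -> R).
Variables (theta : R) (win : bool).

Local Notation d := (dval mu dist theta win).

Lemma dval_gt0 t : wf t ->
  {in leaves t, forall n, mu n != theta -> 0 < dist (mu n) theta} ->
  (if win then theta < value mu t else value mu t < theta) -> 0 < d t.
Proof.
elim/tree_In_ind: t => [n | b cs IH] /=.
  move=> _ dist_gt0 side.
  have mun : mu n != theta.
    by case: win side => side; rewrite ?(gt_eqF side) ?(lt_eqF side).
  have -> : (win && (theta <= mu n)) || (~~ win && (mu n < theta)).
    by case: win side => side /=; rewrite ?(ltW side) ?side.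
  exact: dist_gt0 (mem_head _ _) mun.
move=> /andP [cs_neq0 wf_cs] dist_gt0 side.
have IHc c : List.In c cs ->
    (if win then theta < value mu c else value mu c < theta) -> 0 < d c.
  move=> ccs; apply: IH => //; first exact: (allInP _ _ wf_cs).
  by move=> n nc; apply: dist_gt0; apply/(leaves_nodeP b); exists c.
have ne_map (f : tree -> R) : map f cs != [::] by rewrite -size_eq0 size_map.
have d_le_max c : List.In c cs -> d c <= seqmax (map d cs).
  by move=> ccs; apply/seqmax_ge/mapInP; exists c.
have Q_gt0 : (forall c, List.In c cs -> 0 < d c) ->
    0 < if all (fun x => 0 < x) (map d cs)
        then (\sum_(x <- map d cs) x^-1)^-1 else 0.
  move=> d_gt0; have all_gt0 : all (fun x => 0 < x) (map d cs).
    by rewrite all_map; apply/allInP => c /d_gt0.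
  by rewrite all_gt0 invr_gt0 sum_inv_gt0.
case: b side; case: win IHc d_le_max Q_gt0 => IHc d_le_max Q_gt0 /= side.
- have /mapInP [c ccs vc] := seqmax_mem (ne_map (value mu)).
  by apply: lt_le_trans (d_le_max c ccs); apply: IHc; rewrite -?vc.
- apply: Q_gt0 => c ccs; apply: IHc => //.
  by apply: le_lt_trans side; apply/seqmax_ge/mapInP; exists c.
- apply: Q_gt0 => c ccs; apply: IHc => //.
  by apply: lt_le_trans side _; apply/seqmin_le/mapInP; exists c.
- have /mapInP [c ccs vc] := seqmin_mem (ne_map (value mu)).
  by apply: lt_le_trans (d_le_max c ccs); apply: IHc; rewrite -?vc.
Qed.

End GameValues.

Section Weights.
Variables (R : realFieldType) (mu : nat -> R) (dist : R -> R -> R).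
Variables (theta : R) (win : bool) (cstar : tree -> nat) (arb : tree -> nat -> R).

Local Notation d := (dval mu dist theta win).
Local Notation w := (weight mu dist theta win cstar arb).

Lemma weight_dval_child_scale b cs c l :
  uniq (leaves (Node b cs)) ->
  (b = win -> (cstar (Node b cs) < size cs)%N /\
              d (nth (Leaf 0) cs (cstar (Node b cs))) = d (Node b cs)) ->
  d (Node b cs) != 0 -> 0 < w (Node b cs) l ->
  List.In c cs -> l \in leaves c ->
  exists2 k, 0 < k & w (Node b cs) l = k * w c l /\ d (Node b cs) = k * d c.
Proof.
move=> ucs cstarP d_neq0 w_gt0 ccs lc.
have wE : w (Node b cs) l =
    if b == win then
      (if l \in leaves (nth (Leaf 0) cs (cstar (Node b cs)))
       then nth 0 (map (w^~ l) cs) (cstar (Node b cs)) else 0)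
    else \sum_(p <- zip (map (w^~ l) cs) cs | l \in leaves p.2)
           (p.1 / d p.2) / (\sum_(c' <- cs) (d c')^-1).
  by rewrite [LHS]/= (negbTE d_neq0).
case: (boolP (b == win)) => [bw | bnw].
  have [k_lt dk] := cstarP (eqP bw).
  have lk : l \in leaves (nth (Leaf 0) cs (cstar (Node b cs))).
    by apply: contraTT w_gt0 => lk; rewrite wE bw (negbTE lk) ltxx.
  have ck := leaves_child_eq ucs ccs (In_nth _ k_lt) lc lk.
  exists 1 => //; rewrite !mul1r -ck in dk *.
  by rewrite wE bw lk (nth_map (Leaf 0)) // -ck dk.
have dE : d (Node b cs) = if all (fun x => 0 < x) (map d cs)
                          then (\sum_(x <- map d cs) x^-1)^-1 else 0.
  by rewrite /= (negbTE bnw).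
have all_gt0 : all (fun x => 0 < x) (map d cs).
  by apply: contraNT d_neq0 => /negbTE all_gt0; rewrite dE all_gt0.
set S := \sum_(c' <- cs) (d c')^-1.
have SE : \sum_(x <- map d cs) x^-1 = S by rewrite big_map.
have S_gt0 : 0 < S by rewrite -SE sum_inv_gt0 // -size_eq0 size_map; case: (cs) ccs.
have dc_gt0 : 0 < d c by rewrite all_map in all_gt0; apply: (allInP _ _ all_gt0).
exists (d c * S)^-1; first by rewrite invr_gt0 mulr_gt0.
rewrite wE (negbTE bnw) dE all_gt0 SE -{2}(map_id cs) zip_map big_map.
rewrite (big_leaves_child (fun c' => w c' l / d c' / S) ucs ccs lc) /=.
by split; field; rewrite ?gt_eqF.
Qed.

Section OnPath.
Variables (T : tree) (l : nat).
Hypothesis uniqT : uniq (leaves T).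
Hypothesis cstarT : forall b cs, subtree (Node b cs) T -> b = win ->
  (cstar (Node b cs) < size cs)%N /\
  d (nth (Leaf 0) cs (cstar (Node b cs))) = d (Node b cs).

Lemma weight_child_gt0 b cs c :
  subtree (Node b cs) T -> d (Node b cs) != 0 -> 0 < w (Node b cs) l ->
  List.In c cs -> l \in leaves c ->
  [/\ subtree c T, 0 < w c l & d c != 0].
Proof.
move=> csT d_neq0 w_gt0 ccs lc.
have [k k_gt0 [wE dE]] := weight_dval_child_scale
  (subtree_uniq_leaves csT uniqT) (cstarT csT) d_neq0 w_gt0 ccs lc.
split; first exact: subtree_trans (st_child b ccs (st_refl c)) csT.
  by rewrite -(pmulr_rgt0 _ k_gt0) -wE.
by apply: contraNneq d_neq0 => dc0; rewrite dE dc0 mulr0.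
Qed.

Lemma weight_eq_dval_ratio t : subtree t T -> l \in leaves t ->
  0 < w t l -> d t != 0 -> w t l = d t / dist (mu l) theta.
Proof.
elim/tree_In_ind: t => [n | b cs IH] tT lt w_gt0 d_neq0.
  move: lt d_neq0; rewrite mem_seq1 => /eqP -> /=; rewrite eqxx.
  by case: ifP => _ dn; [rewrite divff | rewrite eqxx in dn].
case/leaves_nodeP: lt => c ccs lc.
have [cT wc_gt0 dc_neq0] := weight_child_gt0 tT d_neq0 w_gt0 ccs lc.
have [k _ [-> ->]] := weight_dval_child_scale
  (subtree_uniq_leaves tT uniqT) (cstarT tT) d_neq0 w_gt0 ccs lc.
by rewrite (IH c) // mulrA.
Qed.

Lemma weight_on_path s t : on_path l s t -> subtree t T ->
  0 < w t l -> d t != 0 -> w s l = d s / dist (mu l) theta.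
Proof.
elim=> [t' lt' | b cs c s' ccs path_c IH] tT w_gt0 d_neq0.
  exact: weight_eq_dval_ratio.
have [cT wc_gt0 dc_neq0] :=
  weight_child_gt0 tT d_neq0 w_gt0 ccs (on_path_mem path_c).
exact: IH.
Qed.

End OnPath.

End Weights.

Theorem proposition2
  (R : realFieldType) (X : R -> Prop) (dist : R -> R -> R)
  (hdist : forall x y, X x -> X y -> 0 <= dist x y /\ (dist x y = 0 <-> x = y))
  (theta : R) (Xtheta : X theta)
  (T : tree) (wfT : wf T) (uniqT : uniq (leaves T))
  (mu : nat -> R) (Xmu : forall l, l \in leaves T -> X (mu l))
  (cstar : tree -> nat)
  (hcstar : forall b cs, subtree (Node b cs) T -> b = (theta <= value mu T) ->
     (cstar (Node b cs) < size cs)%N /\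
     dval mu dist theta (theta <= value mu T) (nth (Leaf 0) cs (cstar (Node b cs)))
       = dval mu dist theta (theta <= value mu T) (Node b cs))
  (arb : tree -> nat -> R)
  (harb : forall b cs, subtree (Node b cs) T ->
     dval mu dist theta (theta <= value mu T) (Node b cs) = 0 ->
     (forall l, 0 <= arb (Node b cs) l) /\
     (forall l, l \notin leaves (Node b cs) -> arb (Node b cs) l = 0) /\
     \sum_(l <- leaves (Node b cs)) arb (Node b cs) l = 1)
  (hV : value mu T != theta)
  (l : nat) (hl : l \in leaves T)
  (hw : 0 < weight mu dist theta (theta <= value mu T) cstar arb T l) :
  forall s, on_path l s T ->
    weight mu dist theta (theta <= value mu T) cstar arb s l
    = dval mu dist theta (theta <= value mu T) s / dist (mu l) theta.
Proof.
set win := (theta <= value mu T) in hcstar hw *.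
move=> s path_s.
apply: (weight_on_path uniqT hcstar path_s (st_refl T) hw).
rewrite gt_eqF //; apply: dval_gt0 wfT _ _.
  move=> n nT mun; have [d_ge0 d_eq0] := hdist _ _ (Xmu n nT) Xtheta.
  by rewrite lt_def d_ge0 andbT; apply: contra_neq mun => /d_eq0.
rewrite /win; case: (leP theta) => // le_theta.
by rewrite lt_neqAle le_theta andbT eq_sym.
Qed.
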